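(* A relation $R\subseteq\{0,1\}^V$ is a delta matroid if and only if its indicator signature is terraced.
   Context: $R$ is a delta matroid if for all $x,y\in R$ and all $i$ with $x_i\ne y_i$ there exists $j$ with $x_j\ne y_j$ (possibly $j=i$) such that $x^{\{i,j\}}\in R$, where $x^U$ denotes $x$ with the coordinates in $U$ flipped. A partial configuration $p$ of $V$ is an element of $\{0,1\}^{\mathrm{dom}(p)}$ with $\mathrm{dom}(p)\subseteq V$, and the pinning of a signature $F$ on $V$ is $F_p(x)=F(x,p)$ on $V\setminus\mathrm{dom}(p)$; $p^{\{i\}}$ is $p$ with coordinate $i$ flipped. A signature $F:\{0,1\}^V\to\mathbb R_{\ge0}$ is terraced if for every partial configuration $p$ of $V$ and all $i,j\in\mathrm{dom}(p)$: if $F_p$ is identically zero then $F_{p^{\{i\}}}$ and $F_{p^{\{j\}}}$ are linearly dependent (one is a scalar multiple of the other). *)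

From HB Require Import structures.
From mathcomp Require Import all_boot all_order all_algebra.
Set Implicit Arguments. Unset Strict Implicit. Unset Printing Implicit Defensive.
Import Order.TTheory GRing.Theory Num.Theory.
Local Open Scope ring_scope.

Definition flipU (V : finType) (x : {ffun V -> bool}) (U : {set V})
  : {ffun V -> bool} := [ffun k => if k \in U then ~~ x k else x k].

Definition delta_matroid (V : finType) (R : {set {ffun V -> bool}}) : Prop :=
  forall x y, x \in R -> y \in R -> forall i, x i != y i ->
    exists j, x j != y j /\ flipU x [set i; j] \in R.

(* Partial configuration p of V: p k = Some b iff k \in dom(p) with value b. *)
Definition dom (V : finType) (p : {ffun V -> option bool}) : {set V} :=
  [set k | p k != None].

Definition flipP (V : finType) (p : {ffun V -> option bool}) (i : V)
  : {ffun V -> option bool} :=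
  [ffun k => if k == i then omap negb (p k) else p k].

Definition merge (V : finType) (x : {ffun V -> bool}) (p : {ffun V -> option bool})
  : {ffun V -> bool} :=
  [ffun k => if p k is Some b then b else x k].

(* Pinning F_p(x) = F(x, p). It is represented as a function of a full
   configuration x that only depends on the coordinates of x outside dom(p). *)
Definition pin (V : finType) (Rf : realFieldType) (F : {ffun V -> bool} -> Rf)
  (p : {ffun V -> option bool}) : {ffun V -> bool} -> Rf :=
  fun x => F (merge x p).

Definition lin_dep (T : Type) (Rf : realFieldType) (f g : T -> Rf) : Prop :=
  (exists c : Rf, forall x, f x = c * g x) \/ (exists c : Rf, forall x, g x = c * f x).

Definition terraced (V : finType) (Rf : realFieldType) (F : {ffun V -> bool} -> Rf)
  : Prop :=
  forall (p : {ffun V -> option bool}) (i j : V), i \in dom p -> j \in dom p ->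
    (forall x, pin F p x = 0) ->
    lin_dep (pin F (flipP p i)) (pin F (flipP p j)).

Definition indicator (V : finType) (Rf : realFieldType) (R : {set {ffun V -> bool}})
  : {ffun V -> bool} -> Rf :=
  fun x => if x \in R then 1 else 0.

From Pilot Require Import Defs.
From HB Require Import structures.
From mathcomp Require Import all_boot all_order all_algebra.
Set Implicit Arguments. Unset Strict Implicit. Unset Printing Implicit Defensive.
Import GRing.Theory.

(* Since the pinnings of an indicator are themselves 0/1-valued, two of them
   are linearly dependent exactly when one vanishes or both coincide.  This
   turns terracedness of the indicator into a purely combinatorial property
   [rel_terraced] of R: whenever the pinning of R by p is empty, the pinnings
   by p^{i} and p^{j} are either empty or equal.  The theorem then reduces to
   delta_matroid R <-> rel_terraced R:
   - (->) if z extended by p^{i} lies in R and the p^{j}-pinning is nonempty,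
     the exchange axiom applied at i moves z to its p^{j}-extension, since every
     other candidate step would land in the empty p-pinning;
   - (<-) by induction on the Hamming distance of x, y in R: pin i to y_i, a
     second differing coordinate j to x_j and all agreeing coordinates.  Either
     R meets this pinning, giving a w in R strictly closer to x, or it is
     empty and terracedness forces x^{i,j} into R. *)

Section Configurations.
Variable V : finType.
Implicit Types (x z : {ffun V -> bool}) (p : {ffun V -> option bool}) (A B : {set V}).

Definition diffs x z : {set V} := [set k | x k != z k].

Lemma flipUK x A : flipU (flipU x A) A = x.
Proof. by apply/ffunP => k; rewrite !ffunE; case: (k \in A); rewrite ?negbK. Qed.

Lemma flipU_disjointU x A B :
  [disjoint A & B] -> flipU x (A :|: B) = flipU (flipU x A) B.
Proof.
move=> dAB; apply/ffunP => k; rewrite !ffunE inE.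
by case kA: (k \in A); rewrite ?(disjointFr dAB kA).
Qed.

Lemma dom_flipP p i : dom (flipP p i) = dom p.
Proof.
by apply/setP => k; rewrite !inE ffunE; case: (k =P i) => [->|]; case: (p _).
Qed.

Lemma flipPK p i : flipP (flipP p i) i = p.
Proof.
by apply/ffunP => k; rewrite !ffunE; case: (k =P i) => [->|]; case: (p _) => [[]|].
Qed.

Lemma merge_dom z z' p k : k \in dom p -> Defs.merge z p k = Defs.merge z' p k.
Proof. by rewrite inE !ffunE; case: (p k). Qed.

Lemma merge_flipP_neq z p i k :
  k != i -> Defs.merge z (flipP p i) k = Defs.merge z p k.
Proof. by move=> ki; rewrite !ffunE (negbTE ki). Qed.

Lemma merge_id x p :
  (forall k c, p k = Some c -> x k = c) -> Defs.merge x p = x.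
Proof.
move=> px; apply/ffunP => k; rewrite ffunE.
by case pk: (p k) => //; rewrite (px _ _ pk).
Qed.

Lemma flipU_merge_pinned z p k :
  k \in dom p -> flipU (Defs.merge z p) [set k] = Defs.merge z (flipP p k).
Proof.
rewrite inE => kp; apply/ffunP => l; rewrite !ffunE inE.
by case: eqP => [->|//]; case: (p k) kp.
Qed.

Lemma flipU_merge_free z p k :
  k \notin dom p -> flipU (Defs.merge z p) [set k] = Defs.merge (flipU z [set k]) p.
Proof.
rewrite inE negbK => /eqP kp; apply/ffunP => l; rewrite !ffunE inE.
by case: eqP => [->|_]; rewrite ?kp //; case: (p l).
Qed.

End Configurations.

Local Open Scope ring_scope.

Section IndicatorDependence.
Variables (T : finType) (Rf : realFieldType).
Implicit Types (a b : pred T).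

Definition indicator_of a : T -> Rf := fun t => if a t then 1 else 0.

Lemma indicator_multiple a b (c : Rf) :
  (forall t, indicator_of a t = c * indicator_of b t) ->
  (forall t, ~~ a t) \/ a =1 b.
Proof.
rewrite /indicator_of => abc; case: (pickP a) => [s as_ | a0]; last first.
  by left=> t; rewrite a0.
have := abc s; rewrite as_; case: (b s); last by rewrite mulr0 => /eqP; rewrite oner_eq0.
rewrite mulr1 => c1; right=> t; have := abc t; rewrite -c1 mul1r.
by case: (a t); case: (b t) => // /eqP; rewrite ?oner_eq0 // eq_sym oner_eq0.
Qed.

Lemma lin_dep_indicators a b :
  lin_dep (indicator_of a) (indicator_of b) <->
  [\/ forall t, ~~ a t, forall t, ~~ b t | a =1 b].
Proof.
split=> [[[c abc] | [c bac]] | ].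
- by case: (indicator_multiple abc) => [? | ?]; [constructor 1 | constructor 3].
- case: (indicator_multiple bac) => [? | ba]; first by constructor 2.
  by constructor 3 => t; rewrite ba.
rewrite /indicator_of; case=> [a0 | b0 | ab].
- by left; exists 0 => t; rewrite mul0r (negbTE (a0 t)).
- by right; exists 0 => t; rewrite mul0r (negbTE (b0 t)).
- by left; exists 1 => t; rewrite mul1r ab.
Qed.

End IndicatorDependence.

Section RelationalTerraced.
Variables (V : finType) (R : {set {ffun V -> bool}}).
Implicit Types (p : {ffun V -> option bool}).

Definition pin_empty p : Prop := forall z, Defs.merge z p \notin R.

Lemma pin_emptyP p : pin_empty p \/ exists z, Defs.merge z p \in R.
Proof.
case: (pickP (fun z => Defs.merge z p \in R)) => [z zR | none].
  by right; exists z.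
by left=> z; rewrite none.
Qed.

Definition rel_terraced : Prop :=
  forall p i j, i \in dom p -> j \in dom p -> pin_empty p ->
  [\/ pin_empty (flipP p i), pin_empty (flipP p j) |
      forall z, (Defs.merge z (flipP p i) \in R) = (Defs.merge z (flipP p j) \in R)].

(* Pinnings of the indicator of R are the indicators of the pinnings of R. *)
Lemma terraced_indicatorP (Rf : realFieldType) :
  terraced (indicator Rf R) <-> rel_terraced.
Proof.
have pin0 p : (forall z, pin (indicator Rf R) p z = 0) <-> pin_empty p.
  rewrite /pin /indicator; split=> p0 z; last by rewrite (negbTE (p0 z)).
  by apply/negP => zR; move: (p0 z); rewrite zR => /eqP; rewrite oner_eq0.
pose pinned q := fun z => Defs.merge z q \in R.
have depP p i j := lin_dep_indicators Rf (pinned (flipP p i)) (pinned (flipP p j)).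
split=> tr p i j ip jp /pin0 p0; first exact/(depP p i j)/tr.
exact/(depP p i j)/tr.
Qed.

End RelationalTerraced.

Section DeltaMatroidTerraced.
Variables (V : finType) (R : {set {ffun V -> bool}}).
Implicit Types (x y z w : {ffun V -> bool}) (p : {ffun V -> option bool}).

(* The exchange at i from (z, p^{i}) towards an
   element of the p^{j}-pinning must use coordinate j: using i itself or a
   free coordinate would produce an element of the empty p-pinning. *)
Lemma delta_matroid_transfer p i j b z :
  delta_matroid R -> i != j -> i \in dom p -> j \in dom p -> pin_empty R p ->
  Defs.merge b (flipP p j) \in R ->
  Defs.merge z (flipP p i) \in R -> Defs.merge z (flipP p j) \in R.
Proof.
move=> dm ij ip jp p0 bR; set x0 := Defs.merge z p.
rewrite -!flipU_merge_pinned // -/x0 => xR.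
have xy_i : flipU x0 [set i] i != Defs.merge b (flipP p j) i.
  by rewrite ffunE set11 merge_flipP_neq // (merge_dom b z ip); case: (x0 i).
have [k [xy_k]] := dm _ _ xR bR i xy_i.
have [-> | ki] := eqVneq k i; first by rewrite setUid flipUK (negbTE (p0 z)).
rewrite flipU_disjointU ?disjoints1 ?inE 1?eq_sym // flipUK.
have [-> // | kj] := eqVneq k j.
have kp : k \notin dom p.
  apply: contra xy_k => kp.
  by rewrite ffunE inE (negbTE ki) !merge_flipP_neq // (merge_dom _ b kp).
by rewrite flipU_merge_free // (negbTE (p0 _)).
Qed.

Lemma delta_matroid_rel_terraced : delta_matroid R -> rel_terraced R.
Proof.
move=> dm p i j ip jp p0.
have [-> | ij] := eqVneq i j; first by constructor 3.
have [i0 | [a aR]] := pin_emptyP R (flipP p i); first by constructor 1.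
have [j0 | [b bR]] := pin_emptyP R (flipP p j); first by constructor 2.
constructor 3 => z; apply/idP/idP.
  exact: (delta_matroid_transfer dm ij ip jp p0 bR).
by rewrite eq_sym in ij; exact: (delta_matroid_transfer dm ij jp ip p0 aR).
Qed.

(* Key step of (<-): for x, y in R differing at i <> j, pin i to y_i, j to x_j
   and every coordinate where x and y agree.  If R meets this pinning we get a
   w in R closer to x than y is; otherwise x and y lie in the two flipped
   pinnings, which terracedness forces to coincide, so x^{i,j} is in R. *)
Lemma rel_terraced_exchange x y i j :
  rel_terraced R -> x \in R -> y \in R -> i != j -> x i != y i -> x j != y j ->
  flipU x [set i; j] \in R \/
  exists2 w, w \in R & [/\ w i = y i, w j = x j & forall k, x k = y k -> w k = x k].
Proof.
move=> tr xR yR ij xy_i xy_j; have ji : j != i by rewrite eq_sym.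
pose p : {ffun V -> option bool} := [ffun k =>
  if k == i then Some (y i) else if k == j then Some (x j)
  else if x k == y k then Some (x k) else None].
have ip : i \in dom p by rewrite inE ffunE eqxx.
have jp : j \in dom p by rewrite inE ffunE (negbTE ji) eqxx.
have [p0 | [z zR]] := pin_emptyP R p; last first.
  right; exists (Defs.merge z p) => //; rewrite !ffunE eqxx (negbTE ji) eqxx.
  split=> // k xy_k; rewrite !ffunE xy_k eqxx.
  by case: (k =P i) => [-> // | _]; case: (k =P j) => [<- | _].
have xE : Defs.merge x (flipP p i) = x.
  apply: merge_id => k c; rewrite !ffunE.
  case: (k =P i) => [-> [<-] | _]; first by case: (x i) (y i) xy_i => [] [].
  by case: (k =P j) => [-> [] | _] //; case: eqP => // _ [].
have yE : Defs.merge y (flipP p j) = y.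
  apply: merge_id => k c; rewrite !ffunE.
  case: (k =P j) => [-> | _].
    by rewrite (negbTE ji) /= => -[<-]; case: (x j) (y j) xy_j => [] [].
  by case: (k =P i) => [-> [] | _] //; case: eqP => // -> [].
have xjE : Defs.merge x (flipP p j) = flipU x [set i; j].
  rewrite -flipU_merge_pinned // -{1}(flipPK p i) -flipU_merge_pinned ?dom_flipP //.
  by rewrite xE -flipU_disjointU ?disjoints1 ?inE.
case: (tr p i j ip jp p0) => [i0 | j0 | ij_eq].
- by have := i0 x; rewrite xE xR.
- by have := j0 y; rewrite yE yR.
- by left; rewrite -xjE -ij_eq xE.
Qed.

Lemma rel_terraced_delta_matroid : rel_terraced R -> delta_matroid R.
Proof.
move=> tr x y; have [n] := ubnP #|diffs x y|.
elim: n => // n IH in x y *; rewrite ltnS => dxy xR yR i xy_i.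
case: (pickP (fun j => (j != i) && (x j != y j))) => [j /andP [ji xy_j] | agree];
  last first.
  (* i is the only differing coordinate, so flipping it turns x into y. *)
  exists i; split=> //; rewrite setUid; congr (_ \in R): yR.
  apply/ffunP => k; rewrite ffunE inE; case: (k =P i) => [-> | /eqP ki].
    by case: (x i) (y i) xy_i => [] [].
  by move: (agree k); rewrite ki => /negbFE/eqP.
have ij : i != j by rewrite eq_sym.
have [xijR | [w wR [wi wj wx]]] := rel_terraced_exchange tr xR yR ij xy_i xy_j.
  by exists j.
have closer : (#|diffs x w| < #|diffs x y|)%N.
  apply/proper_card/properP; split; last by exists j; rewrite !inE ?wj ?eqxx.
  by apply/subsetP => k; rewrite !inE; apply: contra => /eqP/wx ->.
have xw_i : x i != w i by rewrite wi.
have [k [xw_k xikR]] := IH x w (leq_trans closer dxy) xR wR i xw_i.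
by exists k; split=> //; apply: contra xw_k => /eqP/wx ->.
Qed.

End DeltaMatroidTerraced.

Theorem mainTheorem11 (Rf : realFieldType) (V : finType) (R : {set {ffun V -> bool}}) :
  delta_matroid R <-> terraced (indicator Rf R).
Proof.
apply: iff_trans (iff_sym (terraced_indicatorP R Rf)).
by split; [exact: delta_matroid_rel_terraced | exact: rel_terraced_delta_matroid].
Qed.
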